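(* Let $(S,d)$ be a metric space and let $P$ be a non-empty subset of $S$ with the induced metric. If $f\in\mathrm{BL}(P)$ and $c\in\mathbb{R}$ are such that $|f\vee c\mathbf{1}|_L=|f|_L$, then $$\mathcal{E}^{S,0}_P(f\vee c\mathbf{1})\vee c\mathbf{1}=\mathcal{E}^{S,0}_P(f)\vee c\mathbf{1}.$$
   Context: $\mathrm{BL}(P)$ is the space of bounded real-valued Lipschitz functions on $P$, $|f|_L=\sup_{x\neq y}|f(x)-f(y)|/d(x,y)$ (with $|f|_L=0$ on a singleton), $\vee$ is pointwise maximum, and $c\mathbf{1}$ denotes the constant function $c$ (on $P$ or on $S$ as appropriate). For $f\in\mathrm{BL}(P)$, $\mathcal{E}^{S,0}_P f(x)=\sup_{p\in P}[f(p)-|f|_L d(p,x)]$ for $x\in S$. *)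

From HB Require Import structures.
From mathcomp Require Import all_boot all_order all_algebra.
From mathcomp Require Import boolp classical_sets reals.
Set Implicit Arguments. Unset Strict Implicit. Unset Printing Implicit Defensive.
Import Order.TTheory GRing.Theory Num.Theory.
Local Open Scope classical_set_scope.
Local Open Scope ring_scope.

Section Defs.
Variables (R : realType) (S : Type) (d : S -> S -> R).

Definition is_metric : Prop :=
  (forall x y, 0 <= d x y) /\
  (forall x y, d x y = 0 <-> x = y) /\
  (forall x y, d x y = d y x) /\
  (forall x y z, d x z <= d x y + d y z).

(* f (a function on S, of which only the restriction to P matters) is
   bounded and Lipschitz on P w.r.t. the induced metric: f|_P in BL(P). *)
Definition BL (P : set S) (f : S -> R) : Prop :=
  (exists M, forall x, P x -> `|f x| <= M) /\
  (exists K, forall x y, P x -> P y -> `|f x - f y| <= K * d x y).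

(* |f|_L = sup_{x <> y in P} |f x - f y| / d(x,y), and 0 if there is no
   pair of distinct points (P a singleton). *)
Definition lip_const (P : set S) (f : S -> R) : R :=
  let A := [set r : R | exists x y, [/\ P x, P y, x <> y &
                          r = `|f x - f y| / d x y]] in
  if pselect (A !=set0) is left _ then sup A else 0.

Definition ext0 (P : set S) (f : S -> R) (x : S) : R :=
  sup [set f p - lip_const P f * d p x | p in P].

End Defs.

From HB Require Import structures.
From mathcomp Require Import all_boot all_order all_algebra.
From mathcomp Require Import boolp classical_sets reals.
Import Order.TTheory GRing.Theory Num.Theory.
Local Open Scope classical_set_scope.
Local Open Scope ring_scope.

(* With L := |f|_L = |f v c|_L and D := L d(p, x) >= 0, every term of the
   supremum defining E(f v c)(x) satisfies
     f p - D <= (f p v c) - D = (f p - D) v (c - D) <= (f p - D) v c,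
   so sup of the middle terms lies between E f (x) and E f (x) v c, and the
   two sides agree once c is adjoined. *)

Lemma lip_const_ge0 (R : realType) (S : Type) (d : S -> S -> R)
    (P : set S) (f : S -> R) :
  (forall x y, 0 <= d x y) -> 0 <= lip_const d P f.
Proof.
move=> d_ge0; rewrite /lip_const; case: pselect => // -[r Ar].
set A := [set r : R | _] in Ar *.
have [supA|] := pselect (has_sup A); last by move/sup_out ->.
apply: le_trans (sup_upper_bound supA Ar).
by case: Ar => [x [y [_ _ _ ->]]]; rewrite divr_ge0.
Qed.

Section SupImage.
Variables (R : realType) (T : Type) (P : set T).
Implicit Types F G H : T -> R.

Lemma has_ubound_image_subr F H M :
  (forall p, P p -> F p <= M) -> (forall p, P p -> 0 <= H p) ->
  has_ubound [set F p - H p | p in P].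
Proof.
move=> F_le H_ge0; exists M => _ [p Pp <-].
by rewrite lerBlDr (le_trans (F_le p Pp)) // lerDl H_ge0.
Qed.

Lemma has_ubound_image_le F G :
  has_ubound (G @` P) -> (forall p, P p -> F p <= G p) -> has_ubound (F @` P).
Proof.
move=> [M GM] FG; exists M => _ [p Pp <-].
by apply: le_trans (FG p Pp) _; apply: GM; exists p.
Qed.

Lemma sup_image_le F G :
  P !=set0 -> has_ubound (G @` P) -> (forall p, P p -> F p <= G p) ->
  sup (F @` P) <= sup (G @` P).
Proof.
move=> [p0 Pp0] Gub FG; apply: ge_sup; first by exists (F p0), p0.
move=> _ [p Pp <-]; apply: le_trans (FG p Pp) _.
by apply: ub_le_sup => //; exists p.
Qed.

Lemma max_sup_image_squeeze F G c :
  P !=set0 -> has_ubound (G @` P) ->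
  (forall p, P p -> F p <= G p <= Num.max (F p) c) ->
  Num.max (sup (G @` P)) c = Num.max (sup (F @` P)) c.
Proof.
move=> P0 Gub FGc.
have FG p : P p -> F p <= G p by move=> /FGc /andP[].
have supG_le : sup (G @` P) <= Num.max (sup (F @` P)) c.
  have [p0 Pp0] := P0; apply: ge_sup; first by exists (G p0), p0.
  move=> _ [p Pp <-]; apply: le_trans (proj2 (andP (FGc p Pp))) _.
  apply: le_max2 => //; apply: ub_le_sup; last by exists p.
  exact: has_ubound_image_le _ _ Gub FG.
apply/le_anti; rewrite !ge_max !le_max !lexx !orbT !andbT -le_max supG_le.
by rewrite (sup_image_le _ _ P0 Gub FG).
Qed.

End SupImage.

Theorem corollary4p5 (R : realType) (S : Type) (d : S -> S -> R)
  (P : set S) (f : S -> R) (c : R) :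
  is_metric d -> P !=set0 -> BL d P f ->
  lip_const d P (fun p => Num.max (f p) c) = lip_const d P f ->
  forall x : S,
    Num.max (ext0 d P (fun p => Num.max (f p) c) x) c =
    Num.max (ext0 d P f x) c.
Proof.
move=> [d_ge0 _] P0 [[M fM] _] Lfc x; rewrite /ext0 Lfc.
set L := lip_const d P f.
have Ld_ge0 p : 0 <= L * d p x by rewrite mulr_ge0 ?lip_const_ge0.
have fc_le p : P p -> Num.max (f p) c <= Num.max M c.
  by move=> Pp; apply: le_max2 => //; apply: le_trans (ler_norm _) (fM p Pp).
apply: max_sup_image_squeeze => // [|p Pp].
  by apply: has_ubound_image_subr fc_le _ => p _.
rewrite lerD2r le_max lexx addr_maxl /=.
by apply: le_max2 => //; rewrite lerBlDr lerDl.
Qed.
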